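(* There exists a two-way optical interference automaton (2OIA) that recognizes the language $L_{pal}=\{ww^R\mid w\in\{a,b\}^*\}$ (where $w^R$ is $w$ reversed) in $O(n^2)$ time, where $n$ is the input length, with no restriction on the wavelength of the light.
   Context: A two-way optical interference automaton (2OIA) is a deterministic machine with finite state set $Q$, start state $q_0$, accepting and rejecting states, finite input alphabet $\Sigma$, and tape alphabet $\Gamma=\Sigma\cup\{\text{¢},\$\}$. On input $w=w_1\cdots w_n$ the read-only tape holds ¢$w_1\cdots w_n\$$ in cells $0,1,\dots,n+1$, scanned by a two-way head. For each cell $m$ there is a monochromatic point light source at the point $(m,0)$ of the plane; all sources have the same wavelength $\lambda$ and the same initial amplitude $A_0$, and each source is at any moment either switched off or switched on with initial phase $0$ or $\pi$. A detector is located at a grid point $(j,k)$ with $j,k\in\{0,\tfrac12,1,\tfrac32,\dots,n+1\}$, pointing towards the source array; its field of vision is the cone making angle $\pi/4$ with the vertical line through it, so it sees exactly the sources at $(m,0)$ with $|m-j|\le k$. The resultant wave at the detector is $\sum A_0 r_m^{-1}e^{i(\phi_m+2\pi r_m/\lambda)}$, summed over the switched-on sources it sees, where $r_m$ is the distance from the source to the detector and $\phi_m\in\{0,\pi\}$ the source's phase; the detector outputs $\underline{1}$ if this resultant is nonzero and $\underline{0}$ otherwise. The transition function $\delta:Q\times\Gamma\times\{\underline0,\underline1\}\to Q\times\{\text{left},\text{right},\text{stay}\}\times\{\text{left},\text{right},\text{up},\text{down},\text{stay}\}\times\{\mathrm{toggle}(0),\mathrm{toggle}(\pi),-\}$ maps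 (state, scanned symbol, detector output) to a new state, a move of the head by one cell, a move of the detector by one grid step (of length $1/2$), and an action on the source of the currently scanned cell: $\mathrm{toggle}(\phi)$ switches it on with phase $\phi$ if it is off and switches it off if it is on; $-$ does nothing. Initially all sources are off, the machine is in $q_0$, the head is on cell $0$, and the detector is at a prescribed initial grid position. For a given source, a maximal sequence of toggles at consecutive time steps is called non-transient if its length is odd; there is a constant $k$ such that the machine crashes if it attempts a non-transient toggle sequence on a single source for the $(k+1)$-th time. The machine accepts when it is in an accepting state with detector output $\underline0$. Its running time is the total number of moves made by the head plus the number of moves made by the detector. A 2OIA recognizes a language $L$ if it accepts every input in $L$ and rejects every input not in $L$. *)

From Stdlib Require Import Reals List FinFun Arith Bool.
Import ListNotations.

Set Implicit Arguments.

Inductive sym : Type := sa | sb.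

Inductive tsym : Type := cent | dollar | letter (x : sym).

Inductive hmove : Type := HLeft | HRight | HStay.
Inductive dmove : Type := DLeft | DRight | DUp | DDown | DStay.
Inductive phase : Type := Ph0 | PhPi.
Inductive action : Type := Toggle (p : phase) | NoAct.

Inductive srcst : Type := Off | On (p : phase).

(** Tape contents on input w (length n): cell 0 = ¢, cells 1..n = w, cell n+1 = $. *)
Definition tape (w : list sym) (m : nat) : tsym :=
  match m with
  | O => cent
  | S i => match nth_error w i with Some x => letter x | None => dollar end
  end.

(** The detector position is measured in half-units: the pair (J,K)
    of naturals denotes the grid point (J/2, K/2); the grid is
    0 <= J, K <= 2(n+1).  [det_init n] is the prescribed initial detector
    position on inputs of length n.  [kmax] is the constant k of the
    non-transient-toggle restriction. *)
Record OIA : Type := mkOIA {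
  Q : Type;
  Q_finite : Finite Q;
  q0 : Q;
  accepting : Q -> bool;
  rejecting : Q -> bool;
  acc_rej_disjoint : forall q, accepting q = true -> rejecting q = false;
  delta : Q -> tsym -> bool -> Q * hmove * dmove * action;
  det_init : nat -> nat * nat;
  det_init_ok : forall n, fst (det_init n) <= 2 * (n + 1) /\ snd (det_init n) <= 2 * (n + 1);
  kmax : nat
}.

(** The detector at (J/2, K/2) sees the source at (m,0) iff |m - J/2| <= K/2. *)
Definition sees (J K m : nat) : bool := (2 * m <=? J + K) && (J <=? 2 * m + K).

Definition dist (J K m : nat) : R :=
  sqrt (Rsqr (INR m - INR J / 2) + Rsqr (INR K / 2)).

Definition phase_val (p : phase) : R := match p with Ph0 => 0%R | PhPi => PI end.

(** Contribution of source m to the real part (f = cos) resp. imaginary part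
    (f = sin) of  A0 r^-1 e^{i(phi + 2 pi r / lambda)}. *)
Definition contrib (f : R -> R) (lam A0 : R) (J K : nat) (s : nat -> srcst) (m : nat) : R :=
  if sees J K m then
    match s m with
    | Off => 0%R
    | On p => (A0 / dist J K m * f (phase_val p + 2 * PI * dist J K m / lam))%R
    end
  else 0%R.

Definition resultant_part (f : R -> R) (n : nat) (lam A0 : R) (J K : nat) (s : nat -> srcst) : R :=
  fold_right (fun m acc => (contrib f lam A0 J K s m + acc)%R) 0%R (seq 0 (n + 2)).

Definition is_on (x : srcst) : bool := match x with Off => false | On _ => true end.

(** Convention for the degenerate case r = 0 (detector sitting exactly on a
    switched-on source): the resultant is infinite, hence nonzero. *)
Definition on_switched_source (J K : nat) (s : nat -> srcst) : bool :=
  (K =? 0) && Nat.even J && is_on (s (Nat.div2 J)).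

(** Detector output: true = 1 (resultant nonzero), false = 0. *)
Definition det_out (n : nat) (lam A0 : R) (J K : nat) (s : nat -> srcst) : bool :=
  if on_switched_source J K s then true
  else if Req_EM_T (resultant_part cos n lam A0 J K s) 0%R then
         (if Req_EM_T (resultant_part sin n lam A0 J K s) 0%R then false else true)
       else true.

Record cfg (Qt : Type) : Type := mkCfg {
  st : Qt;
  hd : nat;
  dj : nat;
  dk : nat;
  srcs : nat -> srcst;
  nt_count : nat -> nat;          (* number of completed non-transient toggle sequences per source *)
  pending : option (nat * bool);  (* source toggled at the previous step and parity of the
                                     current maximal toggle sequence (true = odd length) *)
  moves : nat                     (* head moves + detector moves so far *)
}.

Inductive result (Qt : Type) : Type :=
| Running (c : cfg Qt)
| Crashed (mv : nat)
| Halted (c : cfg Qt).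

(** Close the current maximal toggle sequence; crash (None) if it is the
    (k+1)-th non-transient (odd-length) one on its source. *)
Definition finalize (k : nat) (cnt : nat -> nat) (p : option (nat * bool)) : option (nat -> nat) :=
  match p with
  | Some (m, true) =>
      let c := S (cnt m) in
      if k <? c then None else Some (fun i => if i =? m then c else cnt i)
  | _ => Some cnt
  end.

Definition toggle_src (p : phase) (x : srcst) : srcst :=
  match x with Off => On p | On _ => Off end.

Definition halting (M : OIA) (q : Q M) : bool := accepting M q || rejecting M q.

Definition move_head (n h : nat) (hm : hmove) : option nat :=
  match hm with
  | HLeft => match h with O => None | S h' => Some h' end
  | HRight => if h <? n + 1 then Some (S h) else None
  | HStay => Some h
  end.

Definition move_det (n J K : nat) (dm : dmove) : option (nat * nat) :=
  match dm with
  | DLeft => match J with O => None | S J' => Some (J', K) end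
  | DRight => if J <? 2 * (n + 1) then Some (S J, K) else None
  | DUp => if K <? 2 * (n + 1) then Some (J, S K) else None
  | DDown => match K with O => None | S K' => Some (J, K') end
  | DStay => Some (J, K)
  end.

Definition step (M : OIA) (lam A0 : R) (w : list sym) (c : cfg (Q M)) : result (Q M) :=
  let n := length w in
  let o := det_out n lam A0 (dj c) (dk c) (srcs c) in
  match delta M (st c) (tape w (hd c)) o with
  | (q', hm, dm, a) =>
    let h := hd c in
    let mv := moves c + (match hm with HStay => 0 | _ => 1 end)
                      + (match dm with DStay => 0 | _ => 1 end) in
    let toggled := match a with Toggle _ => true | NoAct => false end in
    let srcs' := match a with
                 | Toggle p => fun i => if i =? h then toggle_src p (srcs c h) else srcs c i
                 | NoAct => srcs c
                 end in
    let cont_run := match pending c with Some (m, _) => toggled && (m =? h) | None => false end in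
    let cnt1 := if cont_run then Some (nt_count c) else finalize (kmax M) (nt_count c) (pending c) in
    let pend1 := if cont_run
                 then match pending c with Some (m, par) => Some (m, negb par) | None => None end
                 else if toggled then Some (h, true) else None in
    match cnt1, move_head n h hm, move_det n (dj c) (dk c) dm with
    | Some cnt1', Some h', Some (J', K') =>
        if halting M q' then
          match finalize (kmax M) cnt1' pend1 with
          | Some cnt2 => Halted (mkCfg q' h' J' K' srcs' cnt2 None mv)
          | None => Crashed (Q M) mv
          end
        else Running (mkCfg q' h' J' K' srcs' cnt1' pend1 mv)
    | _, _, _ => Crashed (Q M) mv
    end
  end.

Definition init_cfg (M : OIA) (w : list sym) : cfg (Q M) :=
  mkCfg (q0 M) 0 (fst (det_init M (length w))) (snd (det_init M (length w)))
        (fun _ => Off) (fun _ => 0) None 0.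

Definition init_result (M : OIA) (w : list sym) : result (Q M) :=
  if halting M (q0 M) then Halted (init_cfg M w) else Running (init_cfg M w).

Fixpoint run (M : OIA) (lam A0 : R) (w : list sym) (t : nat) : result (Q M) :=
  match t with
  | O => init_result M w
  | S t' => match run M lam A0 w t' with
            | Running c => step M lam A0 w c
            | r => r
            end
  end.

Definition terminated (Qt : Type) (r : result Qt) : Prop :=
  match r with Running _ => False | _ => True end.

Definition res_moves (Qt : Type) (r : result Qt) : nat :=
  match r with Running c => moves c | Crashed _ m => m | Halted c => moves c end.

Definition accepted_res (M : OIA) (lam A0 : R) (w : list sym) (r : result (Q M)) : Prop :=
  match r with
  | Halted c => accepting M (st c) = true /\
                det_out (length w) lam A0 (dj c) (dk c) (srcs c) = false
  | _ => False
  end.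

(** M recognizes L (for wavelength lam and amplitude A0) within running time
    T(n): on every input the computation terminates (halts or crashes) after
    at most T(n) head+detector moves, and it is accepting iff w is in L
    (every other terminated computation is a rejection). *)
Definition recognizes_in_time (M : OIA) (lam A0 : R) (L : list sym -> Prop) (T : nat -> nat) : Prop :=
  forall w : list sym, exists t : nat,
    terminated (run M lam A0 w t) /\
    res_moves (run M lam A0 w t) <= T (length w) /\
    (accepted_res M lam A0 w (run M lam A0 w t) <-> L w).

Definition Lpal (x : list sym) : Prop := exists u : list sym, x = u ++ rev u.

From Pilot Require Import Defs.
From Stdlib Require Import Reals List FinFun Bool Lia.
Import ListNotations.

(* On the baseline (K = 0) the detector sees at most the source directly below it, so no
   interference can occur: it reads 1 exactly when it sits on a switched-on source, whatever the
   wavelength.  Switching on the source of cell 0 once and for all and keeping the detector on the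
   baseline therefore turns its abscissa into a counter in 0..n+1 with a zero test.  Every two-way
   one-counter automaton is thus simulated by a 2OIA, each counter step costing two optical steps
   (the detector moves by half cells).  Such an automaton decides L_pal in O(n^2) steps: it checks
   that n is even and then, for i = 1, ..., n, walks i cells right from the left end marker, counts
   its way back, and walks i cells left from the right end marker, comparing w_i with
   w_(n+1-i). *)

(** * Optics on the baseline *)

Lemma sees_baseline J m : sees J 0 m = (J =? 2 * m).
Proof.
  unfold sees; rewrite !Nat.add_0_r.
  destruct (Nat.leb_spec0 (2 * m) J), (Nat.leb_spec0 J (2 * m)), (Nat.eqb_spec J (2 * m));
    simpl; reflexivity || lia.
Qed.

Lemma resultant_part_dark f n lam A0 J K s :
  (forall m, sees J K m = true -> s m = Off) -> resultant_part f n lam A0 J K s = 0%R.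
Proof.
  intros Hdark. unfold resultant_part.
  induction (seq 0 (n + 2)) as [|m ms IH]; simpl; [reflexivity|].
  rewrite IH. unfold contrib.
  destruct (sees J K m) eqn:Hm; [rewrite (Hdark m Hm)|]; ring.
Qed.

Lemma det_out_baseline n lam A0 J s :
  det_out n lam A0 J 0 s = Nat.even J && is_on (s (Nat.div2 J)).
Proof.
  unfold det_out, on_switched_source; simpl.
  destruct (Nat.even J && is_on (s (Nat.div2 J))) eqn:Hlit; [reflexivity|].
  assert (Hdark : forall m, sees J 0 m = true -> s m = Off).
  { intros m Hm. rewrite sees_baseline in Hm. apply Nat.eqb_eq in Hm; subst J.
    rewrite Nat.even_even, Nat.div2_double in Hlit. destruct (s m); easy. }
  rewrite !resultant_part_dark by exact Hdark.
  destruct (Req_EM_T 0 0); congruence.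
Qed.

Definition lit_cell0 (m : nat) : srcst := if m =? 0 then On Ph0 else Off.

Lemma det_out_counter n lam A0 j : det_out n lam A0 (2 * j) 0 lit_cell0 = (j =? 0).
Proof.
  rewrite det_out_baseline, Nat.even_even, Nat.div2_double. now destruct j.
Qed.

Definition advance (M : OIA) (lam A0 : R) (w : list sym) (r : result (Q M)) : result (Q M) :=
  match r with
  | Running c => step M lam A0 w c
  | Crashed _ mv => Crashed _ mv
  | Halted c => Halted c
  end.

Lemma run_succ M lam A0 w t : run M lam A0 w (S t) = advance M lam A0 w (run M lam A0 w t).
Proof. reflexivity. Qed.

Lemma step_moves M lam A0 w (c : cfg (Q M)) : res_moves (step M lam A0 w c) <= moves c + 2.
Proof.
  destruct c as [q h J K s cnt p mv]. unfold step; simpl.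
  destruct (delta M q (tape w h) _) as [[[q' hm] dm] a].
  repeat match goal with
  | |- context [match ?x with _ => _ end] => destruct x
  end; simpl; lia.
Qed.

Lemma run_moves_le M lam A0 w t : res_moves (run M lam A0 w t) <= 2 * t.
Proof.
  induction t as [|t IH]; simpl.
  - unfold init_result. now destruct (halting M (q0 M)).
  - destruct (run M lam A0 w t) as [c| |c]; simpl in *; try lia.
    pose proof (step_moves M lam A0 w c). lia.
Qed.

Lemma recognizes_in_time_mono M lam A0 L (T T' : nat -> nat) :
  (forall n, T n <= T' n) -> recognizes_in_time M lam A0 L T -> recognizes_in_time M lam A0 L T'.
Proof.
  intros HT Hrec w. destruct (Hrec w) as (t & Hterm & Hmoves & Hacc).
  exists t. specialize (HT (length w)). split; [exact Hterm | split; [lia | exact Hacc]].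
Qed.

Lemma step_noact M lam A0 w (c : cfg (Q M)) q' hm dm h' J' K' :
  pending c = None ->
  delta M (st c) (tape w (Defs.hd c)) (det_out (length w) lam A0 (dj c) (dk c) (srcs c))
    = (q', hm, dm, NoAct) ->
  move_head (length w) (Defs.hd c) hm = Some h' ->
  move_det (length w) (dj c) (dk c) dm = Some (J', K') ->
  exists mv, step M lam A0 w c =
    if halting M q' then Halted (mkCfg q' h' J' K' (srcs c) (nt_count c) None mv)
    else Running (mkCfg q' h' J' K' (srcs c) (nt_count c) None mv).
Proof.
  intros Hp Hd Hh Hj. destruct c as [q h J K s cnt p mv]; simpl in *; subst p.
  unfold step; simpl. rewrite Hd, Hh, Hj. eexists. reflexivity.
Qed.

(** * Two-way one-counter automata and their simulation *)

Inductive cmove : Type := Inc | Dec | CStay.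

Record OCA : Type := mkOCA {
  cstate : Type;
  cstate_finite : Finite cstate;
  cstart : cstate;
  caccepting : cstate -> bool;
  crejecting : cstate -> bool;
  cacc_rej_disjoint : forall q, caccepting q = true -> crejecting q = false;
  cdelta : cstate -> tsym -> bool -> cstate * hmove * cmove
}.

Section OneCounter.
Variable A : OCA.

Definition chalting (q : cstate A) : bool := caccepting A q || crejecting A q.

Definition ccfg : Type := (cstate A * nat * nat)%type.
Inductive cresult : Type := CRun (x : ccfg) | CHalt (x : ccfg) | CCrash.

Definition move_counter (n j : nat) (cm : cmove) : option nat :=
  match cm with
  | Inc => if j <? n + 1 then Some (S j) else None
  | Dec => if j =? 0 then None else Some (j - 1)
  | CStay => Some j
  end.

Definition cstep (w : list sym) (x : ccfg) : cresult :=
  let '(q, h, j) := x in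
  let '(q', hm, cm) := cdelta A q (tape w h) (j =? 0) in
  match move_head (length w) h hm, move_counter (length w) j cm with
  | Some h', Some j' => if chalting q' then CHalt (q', h', j') else CRun (q', h', j')
  | _, _ => CCrash
  end.

Fixpoint crun (w : list sym) (x : ccfg) (t : nat) : cresult :=
  match t with
  | O => CRun x
  | S t' => match cstep w x with CRun y => crun w y t' | r => r end
  end.

Lemma crun_succ_last w t : forall x,
  crun w x (S t) = match crun w x t with CRun y => cstep w y | r => r end.
Proof.
  induction t as [|t IH]; intros x; [simpl; now destruct (cstep w x)|].
  simpl crun at 1 2. destruct (cstep w x) as [y| |]; [apply IH | reflexivity | reflexivity].
Qed.

(* Acceptance also needs a nonzero counter: only then does the detector read 0. *)
Definition decides_within (w : list sym) (x : ccfg) (T : nat) (P : Prop) : Prop :=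
  exists t q h j, crun w x t = CHalt (q, h, j) /\ t <= T /\
    (caccepting A q = true /\ j <> 0 <-> P).

Definition leads (w : list sym) (x : ccfg) (k : nat) (y : ccfg) : Prop :=
  forall t, crun w x (k + t) = crun w y t.

Lemma leads_step w x y : cstep w x = CRun y -> leads w x 1 y.
Proof. intros Hxy t. simpl. now rewrite Hxy. Qed.

Lemma leads_trans w x y z k l : leads w x k y -> leads w y l z -> leads w x (k + l) z.
Proof. intros Hxy Hyz t. now rewrite <- Nat.add_assoc, Hxy, Hyz. Qed.

Lemma leads_sweep w (f : nat -> ccfg) k x y :
  f 0 = x -> f k = y -> (forall i, i < k -> cstep w (f i) = CRun (f (S i))) -> leads w x k y.
Proof.
  intros <- <-. induction k as [|k IH]; intros Hf t; [reflexivity|].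
  replace (S k + t) with (k + S t) by lia.
  rewrite IH by auto. simpl. now rewrite Hf by lia.
Qed.

Lemma decides_within_leads w x y k T P :
  leads w x k y -> decides_within w y T P -> decides_within w x (k + T) P.
Proof.
  intros Hxy (t & q & h & j & Hrun & Ht & HP).
  exists (k + t), q, h, j. rewrite Hxy. split; [exact Hrun | split; [lia | exact HP]].
Qed.

Lemma decides_within_halt w x q h j :
  cstep w x = CHalt (q, h, j) -> decides_within w x 1 (caccepting A q = true /\ j <> 0).
Proof.
  intros Hx. exists 1, q, h, j. simpl. rewrite Hx.
  split; [reflexivity | split; [lia | reflexivity]].
Qed.

Lemma decides_within_weaken w x T T' P P' :
  T <= T' -> (P <-> P') -> decides_within w x T P -> decides_within w x T' P'.
Proof.
  intros HT HP (t & q & h & j & Hrun & Ht & Hacc).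
  exists t, q, h, j. split; [exact Hrun | split; [lia | rewrite <- HP; exact Hacc]].
Qed.

Inductive sim_state : Type :=
  SwitchOn | Settle | Sim (q : cstate A) | SimMid (q : cstate A) (cm : cmove).

Lemma sim_state_finite : Finite sim_state.
Proof.
  destruct (cstate_finite A) as [qs Hqs].
  exists ([SwitchOn; Settle] ++ map Sim qs
          ++ flat_map (fun q => map (SimMid q) [Inc; Dec; CStay]) qs).
  intros p. rewrite !in_app_iff, in_map_iff, in_flat_map.
  destruct p as [| |q|q cm]; simpl; auto.
  - right; left. eauto.
  - right; right. exists q. split; [apply Hqs|]. destruct cm; simpl; auto.
Qed.

Definition sim_accepting (p : sim_state) : bool :=
  match p with Sim q => caccepting A q | _ => false end.
Definition sim_rejecting (p : sim_state) : bool :=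
  match p with Sim q => crejecting A q | _ => false end.

Lemma sim_acc_rej_disjoint p : sim_accepting p = true -> sim_rejecting p = false.
Proof. destruct p; simpl; auto using cacc_rej_disjoint. Qed.

Definition detector_half (cm : cmove) : dmove :=
  match cm with Inc => DRight | Dec => DLeft | CStay => DStay end.

Definition sim_delta (p : sim_state) (s : tsym) (o : bool) : sim_state * hmove * dmove * action :=
  match p with
  | SwitchOn => (Settle, HStay, DStay, Toggle Ph0)
  | Settle => (Sim (cstart A), HStay, DStay, NoAct)
  | Sim q => let '(q', hm, cm) := cdelta A q s o in (SimMid q' cm, hm, detector_half cm, NoAct)
  | SimMid q cm => (Sim q, HStay, detector_half cm, NoAct)
  end.

Lemma det_init_origin n : fst (0, 0) <= 2 * (n + 1) /\ snd (0, 0) <= 2 * (n + 1).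
Proof. simpl; lia. Qed.

Definition oia_of_oca : OIA :=
  mkOIA sim_state_finite SwitchOn sim_accepting sim_rejecting sim_acc_rej_disjoint sim_delta
        (fun _ => (0, 0)) det_init_origin 1.

Lemma move_det_half n j cm j' :
  move_counter n j cm = Some j' ->
  exists J1, move_det n (2 * j) 0 (detector_half cm) = Some (J1, 0) /\
             move_det n J1 0 (detector_half cm) = Some (2 * j', 0).
Proof.
  destruct cm; cbn [move_counter detector_half]; intros Hj.
  - destruct (Nat.ltb_spec0 j (n + 1)) as [Hlt|]; [|discriminate]. injection Hj as <-.
    exists (S (2 * j)). unfold detector_half, move_det.
    destruct (Nat.ltb_spec0 (2 * j) (2 * (n + 1))), (Nat.ltb_spec0 (S (2 * j)) (2 * (n + 1)));
      try lia.
    split; [reflexivity|]. do 2 f_equal. lia.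
  - destruct j as [|j]; [discriminate|]. injection Hj as <-.
    exists (S (2 * j)). replace (2 * S j) with (S (S (2 * j))) by lia. simpl.
    split; [reflexivity|]. do 2 f_equal. lia.
  - injection Hj as <-. exists (2 * j). split; reflexivity.
Qed.

Definition encodes (c : cfg (Q oia_of_oca)) (x : ccfg) : Prop :=
  let '(q, h, j) := x in
  st c = Sim q /\ Defs.hd c = h /\ dj c = 2 * j /\ dk c = 0 /\ srcs c = lit_cell0 /\
  pending c = None.

Definition res_encodes (r : result (Q oia_of_oca)) (x : cresult) : Prop :=
  match x, r with
  | CRun y, Running c | CHalt y, Halted c => encodes c y
  | CCrash, _ => True
  | _, _ => False
  end.

Lemma step_twice_encodes lam A0 w c x :
  encodes c x ->
  res_encodes (advance oia_of_oca lam A0 w (step oia_of_oca lam A0 w c)) (cstep w x).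
Proof.
  destruct x as [[q h] j]. intros (Hq & Hh & HJ & HK & Hs & Hp). unfold cstep.
  destruct (cdelta A q (tape w h) (j =? 0)) as [[q' hm] cm] eqn:Hd.
  destruct (move_head (length w) h hm) as [h'|] eqn:Hh'; [|exact I].
  destruct (move_counter (length w) j cm) as [j'|] eqn:Hj'; [|exact I].
  destruct (move_det_half _ _ _ _ Hj') as (J1 & HJ1 & HJ2).
  assert (Hout : det_out (length w) lam A0 (dj c) (dk c) (srcs c) = (j =? 0))
    by (rewrite HJ, HK, Hs; apply det_out_counter).
  destruct (step_noact oia_of_oca lam A0 w c (SimMid q' cm) hm (detector_half cm) h' J1 0 Hp)
    as [mv1 Hstep1].
  { rewrite Hq, Hh, Hout. simpl. rewrite Hd. reflexivity. }
  { rewrite Hh; exact Hh'. }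
  { rewrite HJ, HK; exact HJ1. }
  destruct (step_noact oia_of_oca lam A0 w
              (mkCfg (SimMid q' cm) h' J1 0 (srcs c) (nt_count c) None mv1)
              (Sim q') HStay (detector_half cm) h' (2 * j') 0 eq_refl eq_refl eq_refl HJ2)
    as [mv2 Hstep2].
  simpl in Hstep1, Hstep2 |- *. rewrite Hstep1. simpl. rewrite Hstep2.
  change (halting oia_of_oca (Sim q')) with (chalting q').
  destruct (chalting q'); simpl; repeat split; auto; lia.
Qed.

Hypothesis start_running : chalting (cstart A) = false.

Lemma run_encodes_crun lam A0 w t :
  res_encodes (run oia_of_oca lam A0 w (2 + 2 * t)) (crun w (cstart A, 0, 0) t).
Proof.
  induction t as [|t IH].
  - simpl. unfold step; simpl. unfold halting; simpl. fold (chalting (cstart A)).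
    rewrite start_running. simpl. repeat split; reflexivity.
  - replace (2 + 2 * S t) with (S (S (2 + 2 * t))) by lia. rewrite crun_succ_last.
    rewrite !run_succ.
    destruct (crun w (cstart A, 0, 0) t) as [x|x|];
      destruct (run oia_of_oca lam A0 w (2 + 2 * t)) as [c|mv|c]; simpl in IH |- *;
      try contradiction; auto.
    apply step_twice_encodes, IH.
Qed.

Theorem oia_of_oca_recognizes lam A0 (L : list sym -> Prop) (T : nat -> nat) :
  (forall w, decides_within w (cstart A, 0, 0) (T (length w)) (L w)) ->
  recognizes_in_time oia_of_oca lam A0 L (fun n => 4 * T n + 4).
Proof.
  intros Hdec w. destruct (Hdec w) as (t & q & h & j & Hrun & Ht & Hacc).
  pose proof (run_encodes_crun lam A0 w t) as Henc. rewrite Hrun in Henc.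
  pose proof (run_moves_le oia_of_oca lam A0 w (2 + 2 * t)) as Hmoves.
  destruct (run oia_of_oca lam A0 w (2 + 2 * t)) as [c|mv|c] eqn:Hc; try contradiction.
  destruct Henc as (Hq & _ & HJ & HK & Hs & _).
  exists (2 + 2 * t). rewrite Hc. split; [exact I | split; [simpl in *; lia |]].
  unfold accepted_res. rewrite Hq, HJ, HK, Hs, det_out_counter, <- Hacc. simpl.
  destruct (Nat.eqb_spec j 0); intuition discriminate.
Qed.

End OneCounter.

(** * A one-counter automaton for palindromes *)

Inductive tape_spec (w : list sym) (h : nat) : tsym -> Prop :=
  | TapeCent : h = 0 -> tape_spec w h cent
  | TapeLetter x : 1 <= h <= length w -> nth_error w (h - 1) = Some x -> tape_spec w h (letter x)
  | TapeDollar : length w < h -> tape_spec w h dollar.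

Lemma tapeP w h : tape_spec w h (tape w h).
Proof.
  destruct h as [|h]; [now apply TapeCent|]. simpl.
  destruct (nth_error w h) eqn:Hh.
  - assert (h < length w) by (apply nth_error_Some; congruence).
    apply TapeLetter; [lia | simpl; now rewrite Nat.sub_0_r].
  - apply nth_error_None in Hh. apply TapeDollar. lia.
Qed.

Lemma tape_letter w h :
  1 <= h <= length w -> exists x, tape w h = letter x /\ nth_error w (h - 1) = Some x.
Proof. intros Hh. destruct (tapeP w h); [lia | eauto | lia]. Qed.

Lemma sym_eq_dec (x y : sym) : {x = y} + {x <> y}.
Proof. decide equality. Defined.

Inductive pal_state : Type :=
  | Parity (odd : bool) | Rewind | Seek | CountBack (x : sym) | ToEnd (x : sym)
  | SeekMirror (x : sym) | Restore | Accept | Reject.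

Lemma pal_state_finite : Finite pal_state.
Proof.
  exists [Parity true; Parity false; Rewind; Seek; CountBack sa; CountBack sb; ToEnd sa; ToEnd sb;
          SeekMirror sa; SeekMirror sb; Restore; Accept; Reject].
  intros [[|]| | |[|]|[|]|[|]| | |]; simpl; tauto.
Qed.

Definition pal_accepting (q : pal_state) : bool := match q with Accept => true | _ => false end.
Definition pal_rejecting (q : pal_state) : bool := match q with Reject => true | _ => false end.

Lemma pal_acc_rej_disjoint q : pal_accepting q = true -> pal_rejecting q = false.
Proof. now destruct q. Qed.

Definition pal_delta (q : pal_state) (s : tsym) (zero : bool) : pal_state * hmove * cmove :=
  match q, s with
  | Parity b, cent => (Parity b, HRight, CStay)
  | Parity b, letter _ => (Parity (negb b), HRight, CStay)
  | Parity b, dollar => (if b then Reject else Rewind, HStay, CStay)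
  | Rewind, cent => (Seek, HStay, Inc)
  | Rewind, _ => (Rewind, HLeft, CStay)
  | Seek, letter x => if zero then (CountBack x, HStay, CStay) else (Seek, HRight, Dec)
  | Seek, cent => (Seek, HRight, Dec)
  (* the increment takes the detector off the lit source, so that it reads 0 *)
  | Seek, dollar => (Accept, HStay, Inc)
  | CountBack x, cent => (ToEnd x, HStay, CStay)
  | CountBack x, _ => (CountBack x, HLeft, Inc)
  | ToEnd x, dollar => (SeekMirror x, HStay, CStay)
  | ToEnd x, _ => (ToEnd x, HRight, CStay)
  | SeekMirror x, letter y =>
      if zero then (if sym_eq_dec x y then Restore else Reject, HStay, CStay)
      else (SeekMirror x, HLeft, Dec)
  | SeekMirror x, _ => (SeekMirror x, HLeft, Dec)
  | Restore, dollar => (Rewind, HStay, CStay)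
  | Restore, _ => (Restore, HRight, Inc)
  | Accept, _ => (Accept, HStay, CStay)
  | Reject, _ => (Reject, HStay, CStay)
  end.

Definition pal_oca : OCA := {|
  cstate := pal_state;
  cstate_finite := pal_state_finite;
  cstart := Parity false;
  caccepting := pal_accepting;
  crejecting := pal_rejecting;
  cacc_rej_disjoint := pal_acc_rej_disjoint;
  cdelta := pal_delta
|}.

Definition pal_time (n : nat) : nat := 2 * n + 4 + (n + 1) * (6 * n + 9).

Section Palindromes.
Variable w : list sym.
Local Notation n := (length w).

Ltac decide_nat_tests :=
  repeat match goal with
  | |- context [?a =? ?b] => destruct (Nat.eqb_spec a b); try (exfalso; lia)
  | |- context [?a <? ?b] => destruct (Nat.ltb_spec0 a b); try (exfalso; lia)
  | |- context [match ?p with O => _ | S _ => _ end] => destruct p eqn:?; try (exfalso; lia)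
  end.

Ltac cfg_congr :=
  apply f_equal2; [apply f_equal2; [reflexivity | lia] | lia].

Ltac pal_step :=
  unfold cstep; cbn [cdelta pal_oca];
  try match goal with Hh : tape w ?h = _ |- context [tape w ?h] => rewrite Hh end;
  try match goal with |- context [tape w ?h] => destruct (tapeP w h); try (exfalso; lia) end;
  cbn [pal_delta]; decide_nat_tests; cbn [move_head move_counter]; decide_nat_tests;
  cbn [chalting caccepting crejecting pal_oca pal_accepting pal_rejecting orb];
  f_equal; cfg_congr.

Lemma parity_sweep : leads pal_oca w (Parity false, 1, 0) n (Parity (Nat.odd n), n + 1, 0).
Proof.
  apply (leads_sweep pal_oca w (fun i => (Parity (Nat.odd i), S i, 0)));
    [reflexivity | cfg_congr |].
  intros i Hi. rewrite Nat.odd_succ, <- Nat.negb_odd. pal_step.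
Qed.

Lemma rewind_sweep h j : h <= n + 1 -> leads pal_oca w (Rewind, h, j) h (Rewind, 0, j).
Proof.
  intros Hh. apply (leads_sweep pal_oca w (fun i => (Rewind, h - i, j)));
    [cfg_congr | cfg_congr | intros i Hi; pal_step].
Qed.

Lemma seek_sweep i : i <= n + 1 -> leads pal_oca w (Seek, 0, i) i (Seek, i, 0).
Proof.
  intros Hi. apply (leads_sweep pal_oca w (fun k => (Seek, k, i - k)));
    [cfg_congr | cfg_congr | intros k Hk; pal_step].
Qed.

Lemma count_back_sweep x h : h <= n -> leads pal_oca w (CountBack x, h, 0) h (CountBack x, 0, h).
Proof.
  intros Hh. apply (leads_sweep pal_oca w (fun i => (CountBack x, h - i, i)));
    [cfg_congr | cfg_congr | intros i Hi; pal_step].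
Qed.

Lemma to_end_sweep x j : leads pal_oca w (ToEnd x, 0, j) (n + 1) (ToEnd x, n + 1, j).
Proof.
  apply (leads_sweep pal_oca w (fun i => (ToEnd x, i, j)));
    [reflexivity | reflexivity | intros i Hi; pal_step].
Qed.

Lemma seek_mirror_sweep x j :
  j <= n -> leads pal_oca w (SeekMirror x, n + 1, j) j (SeekMirror x, n + 1 - j, 0).
Proof.
  intros Hj. apply (leads_sweep pal_oca w (fun i => (SeekMirror x, n + 1 - i, j - i)));
    [cfg_congr | cfg_congr | intros i Hi; pal_step].
Qed.

Lemma restore_sweep j : j <= n + 1 -> leads pal_oca w (Restore, n + 1 - j, 0) j (Restore, n + 1, j).
Proof.
  intros Hj. apply (leads_sweep pal_oca w (fun i => (Restore, n + 1 - j + i, i)));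
    [cfg_congr | cfg_congr | intros i Hi; pal_step].
Qed.

Lemma seek_to_mirror i x :
  1 <= i <= n -> tape w i = letter x ->
  leads pal_oca w (Seek, 0, i) (3 * i + n + 4) (SeekMirror x, n + 1 - i, 0).
Proof.
  intros Hi Hx.
  replace (3 * i + n + 4) with (i + (1 + (i + (1 + (n + 1 + (1 + i)))))) by lia.
  apply leads_trans with (y := (Seek, i, 0)); [apply seek_sweep; lia |].
  apply leads_trans with (y := (CountBack x, i, 0)); [apply leads_step; pal_step |].
  apply leads_trans with (y := (CountBack x, 0, i)); [apply count_back_sweep; lia |].
  apply leads_trans with (y := (ToEnd x, 0, i)); [apply leads_step; pal_step |].
  apply leads_trans with (y := (ToEnd x, n + 1, i)); [apply to_end_sweep |].
  apply leads_trans with (y := (SeekMirror x, n + 1, i)); [apply leads_step; pal_step |].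
  apply seek_mirror_sweep; lia.
Qed.

Lemma restore_and_return i x :
  1 <= i <= n -> tape w (n + 1 - i) = letter x ->
  leads pal_oca w (SeekMirror x, n + 1 - i, 0) (i + n + 4) (Seek, 0, S i).
Proof.
  intros Hi Hx.
  replace (i + n + 4) with (1 + (i + (1 + (n + 1 + 1)))) by lia.
  apply leads_trans with (y := (Restore, n + 1 - i, 0)).
  { apply leads_step. unfold cstep; cbn [cdelta pal_oca]. rewrite Hx. cbn [pal_delta].
    destruct (sym_eq_dec x x) as [_|]; [|contradiction]. reflexivity. }
  apply leads_trans with (y := (Restore, n + 1, i)); [apply restore_sweep; lia |].
  apply leads_trans with (y := (Rewind, n + 1, i)); [apply leads_step; pal_step |].
  apply leads_trans with (y := (Rewind, 0, i)); [apply rewind_sweep; lia |].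
  apply leads_step; pal_step.
Qed.

Definition mirror_from (i : nat) : Prop :=
  forall k, i <= k <= n -> nth_error w (k - 1) = nth_error w (n - k).

Lemma mirror_from_step i x y :
  1 <= i <= n -> nth_error w (i - 1) = Some x -> nth_error w (n - i) = Some y ->
  (mirror_from i <-> x = y /\ mirror_from (S i)).
Proof.
  intros Hi Hx Hy. split.
  - intros Hmir. split.
    + specialize (Hmir i ltac:(lia)). congruence.
    + intros k Hk. apply Hmir. lia.
  - intros [<- Hmir] k Hk.
    destruct (Nat.eq_dec k i) as [->|]; [congruence | apply Hmir; lia].
Qed.

Lemma seek_decides d : forall i, i + d = n + 1 -> 1 <= i ->
  decides_within pal_oca w (Seek, 0, i) ((d + 1) * (6 * n + 9)) (mirror_from i).
Proof.
  induction d as [|d IH]; intros i Hid Hi.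
  - replace i with (n + 1) by lia.
    assert (Haccept : cstep pal_oca w (Seek, n + 1, 0) = CHalt pal_oca (Accept, n + 1, 1))
      by pal_step.
    eapply decides_within_weaken;
      [| | eapply decides_within_leads;
           [apply seek_sweep; lia | eapply decides_within_halt, Haccept]].
    + nia.
    + split; [intros _ k Hk; lia | intros _; split; [reflexivity | lia]].
  - destruct (tape_letter w i) as (x & Hx & Hwx); [lia |].
    destruct (tape_letter w (n + 1 - i)) as (y & Hy & Hwy); [lia |].
    replace (n + 1 - i - 1) with (n - i) in Hwy by lia.
    pose proof (mirror_from_step i x y ltac:(lia) Hwx Hwy) as Hstep.
    destruct (sym_eq_dec x y) as [<-|Hne].
    + eapply decides_within_weaken;
        [| | eapply decides_within_leads; [apply (seek_to_mirror i x); auto; lia |];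
             eapply decides_within_leads; [apply (restore_and_return i x); auto; lia |];
             apply IH; lia].
      * nia.
      * tauto.
    + assert (Hreject : cstep pal_oca w (SeekMirror x, n + 1 - i, 0)
                        = CHalt pal_oca (Reject, n + 1 - i, 0)).
      { unfold cstep; cbn [cdelta pal_oca]. rewrite Hy. cbn [pal_delta].
        destruct (sym_eq_dec x y); [contradiction | reflexivity]. }
      eapply decides_within_weaken;
        [| | eapply decides_within_leads;
             [apply (seek_to_mirror i x); auto; lia |
              eapply decides_within_halt, Hreject]].
      * nia.
      * simpl. split; [intros [Hf _]; discriminate | intros Hmir; apply Hstep in Hmir; tauto].
Qed.

Lemma pal_decides_mirror :
  decides_within pal_oca w (Parity false, 0, 0) (pal_time n) (Nat.even n = true /\ mirror_from 1).
Proof.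
  assert (Hparity : leads pal_oca w (Parity false, 0, 0) (1 + n) (Parity (Nat.odd n), n + 1, 0)).
  { apply leads_trans with (y := (Parity false, 1, 0));
      [apply leads_step; pal_step | apply parity_sweep]. }
  unfold pal_time. rewrite <- Nat.negb_odd.
  destruct (Nat.odd n) eqn:Hodd.
  - assert (Hreject : cstep pal_oca w (Parity true, n + 1, 0) = CHalt pal_oca (Reject, n + 1, 0))
      by pal_step.
    eapply decides_within_weaken;
      [| | eapply decides_within_leads;
           [exact Hparity | eapply decides_within_halt, Hreject]].
    + lia.
    + simpl. split; intros [Hf _]; discriminate.
  - assert (Hrewind : leads pal_oca w (Parity false, n + 1, 0) (1 + (n + 1 + 1)) (Seek, 0, 1)).
    { apply leads_trans with (y := (Rewind, n + 1, 0)); [apply leads_step; pal_step |].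
      apply leads_trans with (y := (Rewind, 0, 0)); [apply rewind_sweep; lia |].
      apply leads_step; pal_step. }
    eapply decides_within_weaken;
      [| | eapply decides_within_leads; [exact Hparity |];
           eapply decides_within_leads; [exact Hrewind | apply (seek_decides n 1); lia]].
    + lia.
    + simpl. tauto.
Qed.

End Palindromes.

Lemma mirror_from_1_iff w : mirror_from w 1 <-> rev w = w.
Proof.
  unfold mirror_from. split.
  - intros Hmir. apply nth_error_ext. intros m. rewrite nth_error_rev.
    destruct (Nat.ltb_spec0 m (length w)).
    + rewrite <- (Hmir (S m)) by lia. f_equal. lia.
    + symmetry. apply nth_error_None. lia.
  - intros Hrev k Hk. rewrite <- Hrev at 1. rewrite nth_error_rev.
    destruct (Nat.ltb_spec0 (k - 1) (length w)); [f_equal | ]; lia.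
Qed.

Lemma Lpal_iff w : Lpal w <-> Nat.even (length w) = true /\ rev w = w.
Proof.
  split.
  - intros [u ->]. rewrite length_app, length_rev, rev_app_distr, rev_involutive.
    split; [|reflexivity]. replace (length u + length u) with (2 * length u) by lia.
    apply Nat.even_even.
  - intros [Heven Hrev]. apply Nat.even_spec in Heven. destruct Heven as [k Hk].
    exists (firstn k w).
    assert (Hhalf : firstn k (rev w) = rev (skipn (length w - k) w)) by apply firstn_rev.
    rewrite Hrev in Hhalf. replace (length w - k) with k in Hhalf by lia.
    rewrite <- (firstn_skipn k w) at 1. f_equal. rewrite Hhalf, rev_involutive. reflexivity.
Qed.

Lemma pal_decides w :
  decides_within pal_oca w (cstart pal_oca, 0, 0) (pal_time (length w)) (Lpal w).
Proof.
  eapply decides_within_weaken; [reflexivity | | apply pal_decides_mirror].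
  rewrite Lpal_iff, mirror_from_1_iff. reflexivity.
Qed.

Theorem theorem4 :
  exists M : OIA,
    forall lam A0 : R, (0 < lam)%R -> (0 < A0)%R ->
      exists c : nat,
        recognizes_in_time M lam A0 Lpal (fun n => c * (n * n) + c).
Proof.
  exists (oia_of_oca pal_oca). intros lam A0 _ _. exists 200.
  apply recognizes_in_time_mono with (T := fun n => 4 * pal_time n + 4).
  - intros n. unfold pal_time. nia.
  - apply oia_of_oca_recognizes; [reflexivity | exact pal_decides].
Qed.
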